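(* Let $\mu$ be a positive Borel measure on $\mathbb{R}$, absolutely continuous with respect to Lebesgue measure, with finite moments of all orders, supported on a set $E$ with infinitely many points, let $c\in\mathbb{R}\setminus E$ and $N>0$. With the notation of the context, for every $n\ge1$, $$Q_n^{c,N}(x)=Q_n^c(x)-N\,Q_n^{c,N}(c)\,K_{n-1}^c(x,c),\qquad Q_n^{c,N}(c)=\frac{Q_n^c(c)}{1+NK_{n-1}^c(c,c)}=\kappa_n^{-1}Q_n^c(c),$$ where $\kappa_n=1+NB_n^c$.
   Context: $\{P_n\}$ is the monic orthogonal polynomial sequence (MOPS) for $\mu$, $\|f\|_\mu^2=\int f^2d\mu$. $\{Q_n^c\}$ is the MOPS for $\langle f,g\rangle_\nu=\int fg\frac{1}{x-c}d\mu$, $\|f\|_\nu^2=\langle f,f\rangle_\nu$, and $K_n^c(x,y)=\sum_{k=0}^n\frac{Q_k^c(x)Q_k^c(y)}{\|Q_k^c\|_\nu^2}$. $\{Q_n^{c,N}\}$ is the MOPS for $\langle f,g\rangle_{\nu_N}=\int fg\frac{1}{x-c}d\mu+Nf(c)g(c)$. $B_n^c=\frac{-Q_n^c(c)P_{n-1}(c)}{\|P_{n-1}\|_\mu^2}$. *)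

From HB Require Import structures.
From mathcomp Require Import all_boot all_order all_algebra.
From mathcomp Require Import all_classical all_reals all_analysis.
Set Implicit Arguments. Unset Strict Implicit. Unset Printing Implicit Defensive.
Import Order.TTheory GRing.Theory Num.Theory.
Import numFieldNormedType.Exports.
Local Open Scope classical_set_scope.
Local Open Scope ring_scope.

Definition msupp (R : realType) (mu : {measure set (measurableTypeR R) -> \bar R})
  : set R := [set x | forall e : R, 0 < e -> (0 < mu (ball x e))%E].

Definition ip_mu (R : realType) (mu : {measure set (measurableTypeR R) -> \bar R})
  (p q : {poly R}) : R := Rintegral mu setT (fun x => p.[x] * q.[x]).

Definition ip_nu (R : realType) (mu : {measure set (measurableTypeR R) -> \bar R})
  (c : R) (p q : {poly R}) : R :=
  Rintegral mu setT (fun x => p.[x] * q.[x] / (x - c)).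

Definition ip_nuN (R : realType) (mu : {measure set (measurableTypeR R) -> \bar R})
  (c N : R) (p q : {poly R}) : R :=
  ip_nu mu c p q + N * p.[c] * q.[c].

Definition is_MOPS (R : realType) (B : {poly R} -> {poly R} -> R)
  (P : nat -> {poly R}) : Prop :=
  (forall n, size (P n) = n.+1 /\ lead_coef (P n) = 1) /\
  (forall m n, m <> n -> B (P m) (P n) = 0) /\
  (forall n, B (P n) (P n) != 0).

Definition Kc (R : realType) (mu : {measure set (measurableTypeR R) -> \bar R})
  (c : R) (Q : nat -> {poly R}) (n : nat) (x y : R) : R :=
  \sum_(0 <= k < n.+1) (Q k).[x] * (Q k).[y] / ip_nu mu c (Q k) (Q k).

Definition Bc (R : realType) (mu : {measure set (measurableTypeR R) -> \bar R})
  (c : R) (P Q : nat -> {poly R}) (n : nat) : R :=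
  - (Q n).[c] * (P n.-1).[c] / ip_mu mu (P n.-1) (P n.-1).

(* Write K for the polynomial x |-> K^c_(n-1)(x, c); for the form <.,.>_nu it
   reproduces the value at c on polynomials of degree < n.  The polynomial
   Q_n^(c,N) - Q_n^c + N Q_n^(c,N)(c) K has degree < n and is nu-orthogonal to
   every Q_k^c with k < n, because nu_N-orthogonality reads
   <Q_n^(c,N), Q_k^c>_nu = - N Q_n^(c,N)(c) Q_k^c(c); hence it vanishes, which is
   the first identity.  Evaluating it at c gives the second one, since
   1 + N K(c) = 0 would make K nu_N-orthogonal to all polynomials of degree < n.
   Finally <(x - c) f, g>_nu = <f, g>_mu: splitting K and Q_n^c at c and pairing
   with P_(n-1) gives K(c) a = P_(n-1)(c) and Q_n^c(c) a = - ||P_(n-1)||_mu^2 for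
   a = <1, P_(n-1)>_nu, that is K(c) = B_n^c. *)

From HB Require Import structures.
From mathcomp Require Import all_boot all_order all_algebra.
From mathcomp Require Import all_classical all_reals all_analysis.
From mathcomp Require Import measurable_realfun ring.
Import Order.TTheory GRing.Theory Num.Theory.
Import numFieldNormedType.Exports.
Local Open Scope classical_set_scope.
Local Open Scope ring_scope.

Set Implicit Arguments.
Unset Strict Implicit.
Unset Printing Implicit Defensive.

Lemma size_sub_coefZ_monic (R : nzRingType) n (f p : {poly R}) :
  p \is monic -> size p = n.+1 -> (size f <= n.+1)%N ->
  (size (f - f`_n *: p)%R <= n)%N.
Proof.
move=> /monicP p_lead p_size /leq_sizeP f_size; apply/leq_sizeP => j.
rewrite leq_eqVlt coefB coefZ => /predU1P[<-|n_lt_j].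
  by move: p_lead; rewrite lead_coefE p_size => ->; rewrite mulr1 subrr.
have /leq_sizeP p_small : (size p <= n.+1)%N by rewrite p_size.
by rewrite f_size // p_small // mulr0 subrr.
Qed.

Lemma size_sub_monic (R : nzRingType) n (p q : {poly R}) :
  p \is monic -> q \is monic -> size p = n.+1 -> size q = n.+1 ->
  (size (p - q)%R <= n)%N.
Proof.
move=> /monicP p_lead q_monic p_size q_size.
have p_n : p`_n = 1 by rewrite -p_lead lead_coefE p_size.
by rewrite -[q]scale1r -p_n size_sub_coefZ_monic ?p_size.
Qed.

Lemma size_divXsubC (R : fieldType) (f : {poly R}) c :
  size (f %/ ('X - c%:P)) = (size f).-1.
Proof. by rewrite size_divp ?polyXsubC_eq0 // size_XsubC subn1. Qed.

Lemma lead_coef_divXsubC (R : fieldType) (f : {poly R}) c :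
  (1 < size f)%N -> lead_coef (f %/ ('X - c%:P)) = lead_coef f.
Proof.
move=> f_gt1; set s := f %/ ('X - c%:P).
have s_neq0 : s != 0 by rewrite -size_poly_gt0 size_divXsubC -ltnS prednK // ltnW.
rewrite [in RHS](divp_eq f ('X - c%:P)) modp_XsubC lead_coefDl.
  by rewrite lead_coef_Mmonic ?monicXsubC.
rewrite size_Mmonic ?monicXsubC // size_XsubC addn2 ltnS.
by rewrite (leq_trans (size_polyC_leq1 _)) // size_poly_gt0.
Qed.

Section OrthogonalExpansion.
Variables (R : realType) (B : {poly R} -> {poly R} -> R).
Hypothesis BDl : forall p q r, B (p + q) r = B p r + B q r.
Hypothesis BZl : forall a p r, B (a *: p) r = a * B p r.

Lemma B0l r : B 0 r = 0.
Proof. by rewrite -(scale0r 0) BZl mul0r. Qed.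

Lemma BBl p q r : B (p - q) r = B p r - B q r.
Proof. by rewrite BDl -scaleN1r BZl mulN1r. Qed.

Lemma B_suml (I : Type) (s : seq I) (F : I -> {poly R}) r :
  B (\sum_(i <- s) F i) r = \sum_(i <- s) B (F i) r.
Proof. exact: (big_morph (B^~ r) (fun p q => BDl p q r) (B0l r)). Qed.

Variable P : nat -> {poly R}.
Hypothesis P_MOPS : is_MOPS B P.

Lemma size_MOPS n : size (P n) = n.+1.
Proof. by case: P_MOPS => /(_ n) []. Qed.

Lemma MOPS_monic n : P n \is monic.
Proof. by case: P_MOPS => /(_ n) [_ /monicP]. Qed.

Lemma MOPS_orth m n : m <> n -> B (P m) (P n) = 0.
Proof. by case: P_MOPS => _ [+ _]; apply. Qed.

Lemma MOPS_norm_neq0 n : B (P n) (P n) != 0.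
Proof. by case: P_MOPS => _ []. Qed.

Lemma MOPS_orthogonal n (f : {poly R}) : (size f <= n)%N -> B f (P n) = 0.
Proof.
suff orth_above d (g : {poly R}) m : (size g <= d)%N -> (d <= m)%N -> B g (P m) = 0.
  by move=> f_size; apply: orth_above f_size (leqnn n).
elim: d g => [|d IHd] g g_size d_le_m.
  by move: g_size; rewrite leqn0 size_poly_eq0 => /eqP->; rewrite B0l.
rewrite -(subrK (g`_d *: P d) g) BDl BZl MOPS_orth ?mulr0 ?addr0.
  by apply: IHd (ltnW d_le_m); rewrite size_sub_coefZ_monic ?MOPS_monic ?size_MOPS.
by move=> eq_dm; rewrite eq_dm ltnn in d_le_m.
Qed.

Lemma MOPS_top_coef n (f : {poly R}) :
  (size f <= n.+1)%N -> B f (P n) = f`_n * B (P n) (P n).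
Proof.
move=> f_size; rewrite -{1}(subrK (f`_n *: P n) f) BDl BZl MOPS_orthogonal ?add0r //.
by rewrite size_sub_coefZ_monic ?MOPS_monic ?size_MOPS.
Qed.

Lemma MOPS_expansion n (f : {poly R}) : (size f <= n)%N ->
  f = \sum_(k < n) (B f (P k) / B (P k) (P k)) *: P k.
Proof.
elim: n f => [|n IHn] f f_size.
  by rewrite big_ord0; apply/eqP; rewrite -size_poly_eq0 -leqn0.
rewrite big_ord_recr /= MOPS_top_coef // mulfK ?MOPS_norm_neq0 //.
rewrite -{1}(subrK (f`_n *: P n) f); congr (_ + _).
have g_size : (size (f - f`_n *: P n)%R <= n)%N.
  by rewrite size_sub_coefZ_monic ?MOPS_monic ?size_MOPS.
rewrite {1}(IHn _ g_size); apply: eq_bigr => k _.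
rewrite BBl BZl MOPS_orth ?mulr0 ?subr0 //.
by apply/eqP; rewrite neq_ltn ltn_ord orbT.
Qed.

Lemma MOPS_eq0 n (f : {poly R}) : (size f <= n)%N ->
  (forall k, (k < n)%N -> B f (P k) = 0) -> f = 0.
Proof.
move=> f_size f_orth; rewrite (MOPS_expansion f_size) big1 // => k _.
by rewrite f_orth // mul0r scale0r.
Qed.

End OrthogonalExpansion.

Definition kernel_poly (R : fieldType) (B : {poly R} -> {poly R} -> R)
    (Q : nat -> {poly R}) (n : nat) (c : R) : {poly R} :=
  \sum_(k < n.+1) ((Q k).[c] / B (Q k) (Q k)) *: Q k.

Lemma Kc_kernel_poly (R : realType) (mu : {measure set (measurableTypeR R) -> \bar R})
    (c : R) (Q : nat -> {poly R}) n x :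
  Kc mu c Q n x c = (kernel_poly (ip_nu mu c) Q n c).[x].
Proof.
rewrite /Kc big_mkord horner_sum; apply: eq_bigr => k _.
by rewrite hornerZ [_ * (Q k).[c]]mulrC mulrAC.
Qed.

Section ReproducingKernel.
Variables (R : realType) (B : {poly R} -> {poly R} -> R).
Hypothesis BDl : forall p q r, B (p + q) r = B p r + B q r.
Hypothesis BZl : forall a p r, B (a *: p) r = a * B p r.
Hypothesis Bsym : forall p q, B p q = B q p.
Variables (Q : nat -> {poly R}) (c : R) (n : nat).
Hypothesis Q_MOPS : is_MOPS B Q.

Local Notation K := (kernel_poly B Q n c).

Lemma size_kernel_poly : (size K <= n.+1)%N.
Proof.
apply: leq_trans (size_sum _ _ _) _; apply/bigmax_leqP => k _.
by rewrite (leq_trans (size_scale_leq _ _)) // (size_MOPS Q_MOPS).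
Qed.

Lemma kernel_poly_MOPS j : (j < n.+1)%N -> B K (Q j) = (Q j).[c].
Proof.
move=> j_le_n; rewrite B_suml // (bigD1 (Ordinal j_le_n)) //= big1 ?addr0.
  by rewrite BZl divfK ?(MOPS_norm_neq0 Q_MOPS).
move=> k k_neq_j; rewrite BZl [B _ (Q j)](MOPS_orth Q_MOPS) ?mulr0 // => eq_kj.
by move/eqP: k_neq_j; apply; apply: val_inj.
Qed.

Lemma kernel_poly_reproducing (f : {poly R}) :
  (size f <= n.+1)%N -> B K f = f.[c].
Proof.
move=> f_size; rewrite Bsym (MOPS_expansion BDl BZl Q_MOPS f_size).
rewrite B_suml // horner_sum; apply: eq_bigr => k _.
by rewrite BZl (Bsym (Q k)) kernel_poly_MOPS // hornerZ.
Qed.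

End ReproducingKernel.

Section CauchyTransformForms.
Variables (R : realType) (mu : {measure set (measurableTypeR R) -> \bar R}) (c : R).
Hypothesis mu_moments : forall k : nat, mu.-integrable setT (fun x : R => (x ^+ k)%:E).
Hypothesis c_notin_msupp : ~ msupp mu c.

Lemma integrable_horner (p : {poly R}) : mu.-integrable setT (fun x => p.[x]%:E).
Proof.
have -> : (fun x => p.[x]%:E) = (fun x => \sum_(i < size p) (p`_i * x ^+ i)%:E)%E.
  by apply/funext => x; rewrite horner_coef sumEFin.
apply: integrable_sum => // i _.
exact: eq_integrable (integrableZl _ p`_i (mu_moments i)).
Qed.

Lemma msupp_null_ball : exists2 e : R, 0 < e & mu (ball c e) = 0%E.
Proof.
have /existsNP[e /not_implyP[e_gt0 not_pos]] := c_notin_msupp.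
exists e => //; apply/eqP; rewrite eq_le measure_ge0 andbT leNgt.
exact/negP.
Qed.

Lemma measurable_subrV : measurable_fun setT (fun x : R => (x - c)^-1).
Proof.
rewrite -(setvU [set c]); apply/measurable_funU => //; first exact: measurableC.
split; last exact: measurable_fun_set1.
apply: open_continuous_measurable_fun.
  exact/closed_openC/accessible_closed_set1/hausdorff_accessible/Rhausdorff.
move=> x; rewrite inE /= => /eqP x_neq_c.
apply: (@continuousV R R (fun y => y - c) x); first by rewrite subr_eq0.
by apply: continuousB => //; exact: cst_continuous.
Qed.

(* Away from the mu-null ball around c, the integrand is bounded by a
   multiple of the integrable |p|. *)
Lemma integrable_horner_div (p : {poly R}) :
  mu.-integrable setT (fun x => (p.[x] / (x - c))%:E).
Proof.
have [e e_gt0 null_ball] := msupp_null_ball.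
have mf : measurable_fun setT (fun x => (p.[x] / (x - c))%:E).
  apply/measurable_EFinP/measurable_funM; first exact: measurable_poly.
  exact: measurable_subrV.
have [_ -> //] := @negligible_integrable _ _ R mu setT (ball c e) _
  (measurable_ball c e) measurableT mf null_ball.
have mD : measurable (setT `\` ball c e : set R).
  by apply: measurableD => //; exact: measurable_ball.
apply: (@le_integrable _ _ _ mu _ mD _ (fun x => (e^-1 * p.[x])%:E)).
- exact: measurable_funS mf.
- move=> x [_ x_far]; rewrite !abse_EFin lee_fin normrM normfV [X in _ <= X]normrM.
  have e_le : e <= `|x - c|.
    by rewrite leNgt; apply/negP => lt; apply: x_far; rewrite /ball /= distrC.
  rewrite [`|e^-1|]gtr0_norm ?invr_gt0 // [X in _ <= X]mulrC ler_wpM2l //.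
  by rewrite lef_pV2 ?posrE // (lt_le_trans e_gt0).
- exact: integrableS (integrableZl measurableT e^-1 (integrable_horner p)).
Qed.

Lemma integrable_hornerM (p q : {poly R}) :
  mu.-integrable setT (EFin \o (fun x => p.[x] * q.[x])).
Proof.
by apply: eq_integrable (integrable_horner (p * q)) => // x _; rewrite /= hornerM.
Qed.

Lemma integrable_hornerM_div (p q : {poly R}) :
  mu.-integrable setT (EFin \o (fun x => p.[x] * q.[x] / (x - c))).
Proof.
by apply: eq_integrable (integrable_horner_div (p * q)) => // x _; rewrite /= hornerM.
Qed.

Lemma ip_mu_Dl p q r : ip_mu mu (p + q) r = ip_mu mu p r + ip_mu mu q r.
Proof.
rewrite /ip_mu -RintegralD //; try exact: integrable_hornerM.
by apply: eq_Rintegral => x _; rewrite hornerD mulrDl.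
Qed.

Lemma ip_mu_Zl a p r : ip_mu mu (a *: p) r = a * ip_mu mu p r.
Proof.
rewrite /ip_mu -RintegralZl //; last exact: integrable_hornerM.
by apply: eq_Rintegral => x _; rewrite hornerZ mulrA.
Qed.

Lemma ip_nu_Dl p q r : ip_nu mu c (p + q) r = ip_nu mu c p r + ip_nu mu c q r.
Proof.
rewrite /ip_nu -RintegralD //; try exact: integrable_hornerM_div.
by apply: eq_Rintegral => x _; rewrite hornerD !mulrDl.
Qed.

Lemma ip_nu_Zl a p r : ip_nu mu c (a *: p) r = a * ip_nu mu c p r.
Proof.
rewrite /ip_nu -RintegralZl //; last exact: integrable_hornerM_div.
by apply: eq_Rintegral => x _; rewrite hornerZ !mulrA.
Qed.

Lemma ip_nu_sym p q : ip_nu mu c p q = ip_nu mu c q p.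
Proof. by apply: eq_Rintegral => x _; rewrite (mulrC p.[x]). Qed.

Lemma ip_nu_mulXsubC p q : ip_nu mu c (('X - c%:P) * p) q = ip_mu mu p q.
Proof.
have [e e_gt0 null_ball] := msupp_null_ball.
rewrite /ip_nu /ip_mu /Rintegral; congr fine.
have off_ball := @negligible_integral _ _ R mu setT (ball c e) _
  (measurable_ball c e) measurableT.
rewrite (off_ball _ (integrable_hornerM_div _ _) null_ball).
rewrite (off_ball _ (integrable_hornerM _ _) null_ball).
apply: eq_integral => x; rewrite inE => -[_ x_far]; congr EFin.
have x_neq_c : x - c != 0.
  rewrite subr_eq0; apply/eqP => x_eq_c.
  by apply: x_far; rewrite x_eq_c; exact: ballxx.
by rewrite hornerM hornerXsubC; field.
Qed.

End CauchyTransformForms.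

Section PointMassPerturbation.
Variables (R : realType) (B1 B2 : {poly R} -> {poly R} -> R) (c N : R).
Hypothesis B1Dl : forall p q r, B1 (p + q) r = B1 p r + B1 q r.
Hypothesis B1Zl : forall a p r, B1 (a *: p) r = a * B1 p r.
Hypothesis B2Dl : forall p q r, B2 (p + q) r = B2 p r + B2 q r.
Hypothesis B2Zl : forall a p r, B2 (a *: p) r = a * B2 p r.
Hypothesis B2sym : forall p q, B2 p q = B2 q p.
Hypothesis B2_mulXsubC : forall p q, B2 (('X - c%:P) * p) q = B1 p q.

Let BN p q := B2 p q + N * p.[c] * q.[c].

Let BN_Dl p q r : BN (p + q) r = BN p r + BN q r.
Proof. rewrite /BN B2Dl hornerD; ring. Qed.

Let BN_Zl a p r : BN (a *: p) r = a * BN p r.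
Proof. rewrite /BN B2Zl hornerZ; ring. Qed.

Let BN_sym p q : BN p q = BN q p.
Proof. rewrite /BN B2sym; ring. Qed.

Lemma B2_divXsubC f q : B2 f q = f.[c] * B2 1 q + B1 (f %/ ('X - c%:P)) q.
Proof.
rewrite {1}(divp_eq f ('X - c%:P)) modp_XsubC -(alg_polyC f.[c]) mulrC addrC.
by rewrite B2Dl B2Zl B2_mulXsubC.
Qed.

Variables P Q QN : nat -> {poly R}.
Hypothesis P_MOPS : is_MOPS B1 P.
Hypothesis Q_MOPS : is_MOPS B2 Q.
Hypothesis QN_MOPS : is_MOPS BN QN.
Variable n : nat.

Local Notation K := (kernel_poly B2 Q n c).

(* QN n.+1 - Q n.+1 + N (QN n.+1).[c] K has degree at most n and is
   B2-orthogonal to Q 0, ..., Q n, since BN-orthogonality reads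
   B2 (QN n.+1) (Q k) = - N (QN n.+1).[c] (Q k).[c]. *)
Lemma MOPS_point_mass_kernel : QN n.+1 = Q n.+1 - (N * (QN n.+1).[c]) *: K.
Proof.
apply/eqP; rewrite -subr_eq0 opprD opprK addrA; apply/eqP.
apply: (MOPS_eq0 B2Dl B2Zl Q_MOPS (n := n.+1)).
  rewrite (leq_trans (size_polyD _ _)) // geq_max (leq_trans (size_scale_leq _ _)).
    by rewrite size_sub_monic ?(MOPS_monic QN_MOPS) ?(MOPS_monic Q_MOPS)
               ?(size_MOPS QN_MOPS) ?(size_MOPS Q_MOPS).
  exact: size_kernel_poly.
move=> k k_le_n.
rewrite B2Dl (BBl B2Dl B2Zl) B2Zl (MOPS_orth Q_MOPS) ?subr0; last first.
  by move=> eq_nk; rewrite -eq_nk ltnn in k_le_n.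
rewrite (kernel_poly_MOPS B2Dl B2Zl c Q_MOPS) //.
rewrite -[LHS]/(BN (QN n.+1) (Q k)) BN_sym.
by rewrite (MOPS_orthogonal BN_Dl BN_Zl QN_MOPS) ?(size_MOPS Q_MOPS).
Qed.

(* Otherwise BN K g = g.[c] (1 + N K.[c]) = 0 for every g of degree at most n,
   so K = 0. *)
Lemma point_mass_denom_neq0 : 1 + N * K.[c] != 0.
Proof.
apply/negP => /eqP denom0.
have K0 : K = 0.
  apply: (MOPS_eq0 BN_Dl BN_Zl QN_MOPS (size_kernel_poly c n Q_MOPS)) => k k_le_n.
  rewrite /BN (kernel_poly_reproducing B2Dl B2Zl B2sym) ?(size_MOPS QN_MOPS) //.
  by transitivity ((QN k).[c] * (1 + N * K.[c])); [ring | rewrite denom0 mulr0].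
by move: denom0; rewrite K0 horner0 mulr0 addr0 => /eqP; rewrite oner_eq0.
Qed.

Lemma MOPS_point_mass_at_c : (QN n.+1).[c] = (Q n.+1).[c] / (1 + N * K.[c]).
Proof.
apply: (canRL (mulfK point_mass_denom_neq0)).
rewrite mulrDr mulr1 {1}MOPS_point_mass_kernel hornerD hornerN hornerZ; ring.
Qed.

(* With a := B2 1 (P n), splitting K and Q n.+1 at c against P n gives
   K.[c] a = (P n).[c] and (Q n.+1).[c] a = - B1 (P n) (P n). *)
Lemma kernel_poly_at_c : K.[c] = - (Q n.+1).[c] * (P n).[c] / B1 (P n) (P n).
Proof.
set a := B2 1 (P n).
have size_Pn : (size (P n) <= n.+1)%N by rewrite (size_MOPS P_MOPS).
have KcA : K.[c] * a = (P n).[c].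
  rewrite -(kernel_poly_reproducing B2Dl B2Zl B2sym c Q_MOPS size_Pn).
  rewrite B2_divXsubC (MOPS_orthogonal B1Dl B1Zl P_MOPS) ?addr0 //.
  by rewrite size_divXsubC -subn1 leq_subLR add1n (size_kernel_poly c n Q_MOPS).
have size_Qn : size (Q n.+1) = n.+2 by rewrite (size_MOPS Q_MOPS).
have QcA : (Q n.+1).[c] * a = - B1 (P n) (P n).
  have := MOPS_orthogonal B2Dl B2Zl Q_MOPS size_Pn.
  rewrite B2sym B2_divXsubC => /eqP; rewrite addr_eq0 => /eqP ->.
  rewrite (MOPS_top_coef B1Dl B1Zl P_MOPS) ?size_divXsubC ?size_Qn //.
  have : lead_coef (Q n.+1 %/ ('X - c%:P)) = 1.
    by rewrite lead_coef_divXsubC ?size_Qn // (monicP (MOPS_monic Q_MOPS _)).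
  by rewrite lead_coefE size_divXsubC size_Qn => ->; rewrite mul1r.
have := MOPS_norm_neq0 P_MOPS n.
rewrite -KcA -[B1 _ _]opprK -QcA oppr_eq0 => Qca_neq0.
by field; move: Qca_neq0; rewrite mulf_eq0 negb_or andbC.
Qed.

Lemma MOPS_point_mass_identities :
  [/\ forall x, (QN n.+1).[x] = (Q n.+1).[x] - N * (QN n.+1).[c] * K.[x],
      (QN n.+1).[c] = (Q n.+1).[c] / (1 + N * K.[c]) &
      (QN n.+1).[c] =
        (1 + N * (- (Q n.+1).[c] * (P n).[c] / B1 (P n) (P n)))^-1 * (Q n.+1).[c]].
Proof.
split; last by rewrite -kernel_poly_at_c mulrC MOPS_point_mass_at_c.
  by move=> x; rewrite {1}MOPS_point_mass_kernel hornerD hornerN hornerZ.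
exact: MOPS_point_mass_at_c.
Qed.

End PointMassPerturbation.

(* Absolute continuity, infinite support and N > 0 only ensure that the three
   MOPS exist. *)
Theorem lemma1 (R : realType) (mu : {measure set (measurableTypeR R) -> \bar R})
  (c N : R) (P Q QN : nat -> {poly R}) :
  mu `<< (@lebesgue_measure R) ->
  (forall k : nat, mu.-integrable setT (fun x : R => (x ^+ k)%:E)) ->
  ~ finite_set (msupp mu) ->
  ~ msupp mu c ->
  0 < N ->
  is_MOPS (ip_mu mu) P ->
  is_MOPS (ip_nu mu c) Q ->
  is_MOPS (ip_nuN mu c N) QN ->
  forall n : nat, (1 <= n)%N ->
    (forall x : R,
      (QN n).[x] = (Q n).[x] - N * (QN n).[c] * Kc mu c Q n.-1 x c) /\
    (QN n).[c] = (Q n).[c] / (1 + N * Kc mu c Q n.-1 c c) /\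
    (QN n).[c] = (1 + N * Bc mu c P Q n)^-1 * (Q n).[c].
Proof.
move=> _ mu_moments _ c_notin_msupp _ P_MOPS Q_MOPS QN_MOPS [//|n] _.
have [QN_eq QN_at_c QN_at_c_Bc] := MOPS_point_mass_identities
  (ip_mu_Dl mu_moments) (ip_mu_Zl mu_moments)
  (ip_nu_Dl mu_moments c_notin_msupp) (ip_nu_Zl mu_moments c_notin_msupp)
  (@ip_nu_sym R mu c) (ip_nu_mulXsubC mu_moments c_notin_msupp)
  P_MOPS Q_MOPS QN_MOPS n.
by split=> [x|]; rewrite Kc_kernel_poly //; split.
Qed.
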